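(* Let $f_{SN_3}(x)=\sqrt{\frac{x^2+1}{2}}-\frac{x+\sqrt x+1}{3}$ for $x\in(0,\infty)$, let $f_{SN_3}^*(u)=u\,f_{SN_3}\!\left(\frac{1-u}{u}\right)$ for $u\in(0,1)$, extended by continuity to $[0,1]$ (explicitly $f_{SN_3}^*(u)=\frac{\sqrt2}{2}\sqrt{u^2+(1-u)^2}-\frac13\left(1+\sqrt{u(1-u)}\right)$), and define $\overline M_{SN_3}(C_1,C_2)=E_X\{f_{SN_3}^*(P(C_2\mid x))\}$. Then $$P_e\le \frac12\left[1-\frac{6}{3\sqrt2-2}\,\overline M_{SN_3}(C_1,C_2)\right].$$
   Context: Two-class decision problem: classes $C_1,C_2$, an observation $x$ in a space $\mathrm X$ with density $p(x)$, and a posteriori probabilities $P(C_1\mid x),P(C_2\mid x)\ge0$ with $P(C_1\mid x)+P(C_2\mid x)=1$. $E_X\{g(x)\}=\int_{\mathrm X} g(x)p(x)\,dx$. $P_e=E_X\{\min(P(C_1\mid x),P(C_2\mid x))\}$ is the Bayesian probability of error. *)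

From HB Require Import structures.
From mathcomp Require Import all_boot all_order all_algebra.
From mathcomp Require Import all_classical all_reals all_analysis.
Set Implicit Arguments. Unset Strict Implicit. Unset Printing Implicit Defensive.
Import Order.TTheory GRing.Theory Num.Theory.
Local Open Scope ring_scope.

Definition fSN3 {R : realType} (x : R) : R :=
  Num.sqrt ((x ^+ 2 + 1) / 2) - (x + Num.sqrt x + 1) / 3.

(* f*_{SN_3}(u) = u f_{SN_3}((1-u)/u) on (0,1), extended by continuity to
   [0,1]: the limits at u -> 0+ and u -> 1- are both sqrt2/2 - 1/3. *)
Definition fSN3star {R : realType} (u : R) : R :=
  if (0 < u) && (u < 1) then u * fSN3 ((1 - u) / u)
  else Num.sqrt 2 / 2 - 1 / 3.

From HB Require Import structures.
From mathcomp Require Import all_boot all_order all_algebra.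
From mathcomp Require Import all_classical all_reals all_analysis.
From mathcomp Require Import measurable_realfun.
From mathcomp Require Import ring lra.
Import Order.TTheory GRing.Theory Num.Theory.
Local Open Scope ring_scope.

(* With [P2 = u] the integrand is [g u = s u - (1 + t u) / 3], where
   [s u = sqrt((u^2 + (1-u)^2)/2)] and [t u = sqrt(u(1-u))], and [g] is
   symmetric under [u |-> 1 - u].  For [v = min(u, 1-u) <= 1/2] the convex
   function [s] lies below its chord between [v = 0] and [v = 1/2], and
   [t v >= v]; the two bounds combine to the pointwise affine estimate
   [3 g u <= (3 sqrt 2 - 2) (1/2 - min(u, 1-u))], whose expectation is the
   theorem. *)

Section SqrtBounds.
Context {R : rcfType}.
Implicit Types a b u : R.

Lemma sqrtr_le_of_le_sqr a b : 0 <= b -> a <= b ^+ 2 -> Num.sqrt a <= b.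
Proof. by move=> b0 ab; rewrite -(ger0_norm b0) -sqrtr_sqr ler_wsqrtr. Qed.

Lemma le_sqrtr_of_sqr_le a b : 0 <= b -> b ^+ 2 <= a -> b <= Num.sqrt a.
Proof. by move=> b0 ba; rewrite -(ger0_norm b0) -sqrtr_sqr ler_wsqrtr. Qed.

Lemma mulr_sqrtr u a : 0 <= u -> u * Num.sqrt a = Num.sqrt (u ^+ 2 * a).
Proof. by move=> u0; rewrite sqrtrM ?sqr_ge0 // sqrtr_sqr ger0_norm. Qed.

Lemma sqrtr_half : Num.sqrt (1 / 2 : R) = Num.sqrt 2 / 2.
Proof.
have r2 : Num.sqrt 2 * Num.sqrt 2 = 2 :> R by rewrite -expr2 sqr_sqrtr.
rewrite mul1r sqrtrV // -{3}r2; field.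
by rewrite gt_eqF // sqrtr_gt0.
Qed.

Lemma sqrt2_affine_gt0 : 0 < 3 * Num.sqrt 2 - 2 :> R.
Proof. by have := sqr_sqrtr (ler0n R 2); have := sqrtr_ge0 (2 : R); nra. Qed.

End SqrtBounds.

Definition fSN3star_closed {R : rcfType} (u : R) : R :=
  Num.sqrt ((u ^+ 2 + (1 - u) ^+ 2) / 2) - (1 + Num.sqrt (u * (1 - u))) / 3.

Section ClosedForm.
Context {R : rcfType}.
Implicit Types u v : R.

Lemma fSN3star_closedC u : fSN3star_closed (1 - u) = fSN3star_closed u.
Proof.
rewrite /fSN3star_closed (_ : 1 - (1 - u) = u); last by ring.
by rewrite [(1 - u) ^+ 2 + _]addrC [(1 - u) * _]mulrC.
Qed.

Lemma sqrt_mean_sqr_le_chord v : 0 <= v <= 1 / 2 ->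
  Num.sqrt ((v ^+ 2 + (1 - v) ^+ 2) / 2)
    <= (1 + (Num.sqrt 2 - 1) * (1 - 2 * v)) / 2.
Proof.
move=> /andP[v0 v1]; set r := Num.sqrt 2; set q := 1 - 2 * v.
have r0 : 0 <= r by exact: sqrtr_ge0.
have r2 : r ^+ 2 = 2 by rewrite sqr_sqrtr.
have r1 : 1 <= r by nra.
have chord : 0 <= (r - 1) * q * (1 - q).
  by rewrite !mulr_ge0 // /q subr_ge0; lra.
apply: sqrtr_le_of_le_sqr; rewrite /q in chord *; nra.
Qed.

Lemma le_sqrt_mulrBr v : 0 <= v <= 1 / 2 -> v <= Num.sqrt (v * (1 - v)).
Proof. by move=> /andP[v0 v1]; apply: le_sqrtr_of_sqr_le => //; nra. Qed.

Lemma fSN3star_closed_le_affine v : 0 <= v <= 1 / 2 ->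
  3 * fSN3star_closed v <= (3 * Num.sqrt 2 - 2) * (1 / 2 - v).
Proof.
move=> v01; have := sqrt_mean_sqr_le_chord v v01; have := le_sqrt_mulrBr v v01.
by rewrite /fSN3star_closed; lra.
Qed.

Lemma min_le_fSN3star_closed u : 0 <= u <= 1 ->
  Num.min (1 - u) u <= 1 / 2 - 3 / (3 * Num.sqrt 2 - 2) * fSN3star_closed u.
Proof.
wlog u_le : u / u <= 1 / 2 => [hwlog|] /andP[u0 u1].
  have [|u_gt] := leP u (1 / 2); first by move=> ?; apply: hwlog; lra.
  have uE : u = 1 - (1 - u) by ring.
  by rewrite -fSN3star_closedC minC {1}uE; apply: hwlog; lra.
have k0 := @sqrt2_affine_gt0 R.
rewrite (min_idPr _); last by lra.
rewrite lerBrDr -lerBrDl mulrAC ler_pdivrMr // [X in _ <= X]mulrC.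
by apply: fSN3star_closed_le_affine; lra.
Qed.

Lemma fSN3star_closed0 : fSN3star_closed 0 = Num.sqrt 2 / 2 - 1 / 3 :> R.
Proof.
by rewrite /fSN3star_closed expr0n /= subr0 add0r expr1n mul0r sqrtr0 addr0
  sqrtr_half.
Qed.

Lemma normr_fSN3star_closed_le1 u : 0 <= u <= 1 -> `|fSN3star_closed u| <= 1.
Proof.
move=> /andP[u0 u1]; rewrite /fSN3star_closed.
have s_le1 : Num.sqrt ((u ^+ 2 + (1 - u) ^+ 2) / 2) <= 1.
  by apply: sqrtr_le_of_le_sqr => //; nra.
have t_le1 : Num.sqrt (u * (1 - u)) <= 1 by apply: sqrtr_le_of_le_sqr => //; nra.
have := sqrtr_ge0 ((u ^+ 2 + (1 - u) ^+ 2) / 2); have := sqrtr_ge0 (u * (1 - u)).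
by rewrite ler_norml; lra.
Qed.

End ClosedForm.

Lemma fSN3starE {R : realType} (u : R) :
  0 <= u <= 1 -> fSN3star u = fSN3star_closed u.
Proof.
move=> /andP[u0 u1]; rewrite /fSN3star.
case: ifPn => [/andP[u_gt0 u_lt1] | /nandP u_end].
  have u_neq0 : u != 0 by rewrite gt_eqF.
  set w := (1 - u) / u.
  have w0 : 0 <= w by rewrite divr_ge0 // subr_ge0.
  have es : u * Num.sqrt ((w ^+ 2 + 1) / 2)
            = Num.sqrt ((u ^+ 2 + (1 - u) ^+ 2) / 2).
    by rewrite mulr_sqrtr 1?ltW //; congr Num.sqrt; rewrite /w; field.
  have et : u * Num.sqrt w = Num.sqrt (u * (1 - u)).
    by rewrite mulr_sqrtr 1?ltW //; congr Num.sqrt; rewrite /w; field.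
  by rewrite /fSN3star_closed -es -et /fSN3 /w; field.
have [->|->] : u = 0 \/ u = 1 by case: u_end; rewrite -?leNgt; lra.
  by rewrite fSN3star_closed0.
by rewrite -fSN3star_closedC subrr fSN3star_closed0.
Qed.

Lemma measurable_fSN3star_closed {R : realType} :
  measurable_fun setT (@fSN3star_closed R).
Proof.
have msqrt := continuous_measurable_fun (@sqrt_continuous R).
apply: measurable_funB; first apply: measurableT_comp msqrt _.
  apply: measurable_funM => //; apply: measurable_funD; apply: measurable_funX.
    exact: measurable_id.
  by apply: measurable_funB => //; exact: measurable_id.
apply: measurable_funM => //; apply: measurable_funD => //.
apply: measurableT_comp msqrt _; apply: measurable_funM; first exact: measurable_id.
by apply: measurable_funB => //; exact: measurable_id.
Qed.

Section AffineBoundIntegral.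
Context {d : measure_display} {T : measurableType d} {R : realType}.

Lemma finite_measure_bounded_integrable (mu : measure T R) (f : T -> R) (M : R) :
  (mu setT < +oo)%E -> measurable_fun setT f -> (forall x, `|f x| <= M) ->
  mu.-integrable setT (EFin \o f).
Proof.
move=> muT mf fM; apply: measurable_bounded_integrable => //.
exists M; split; first exact: num_real.
by move=> y My x _; exact: le_trans (fM x) (ltW My).
Qed.

Lemma Rintegral_le_affine (P : probability T R) (f g : T -> R) (a c M N : R) :
  measurable_fun setT f -> measurable_fun setT g ->
  (forall x, `|f x| <= M) -> (forall x, `|g x| <= N) ->
  (forall x, f x <= a - c * g x) ->
  Rintegral P setT f <= a - c * Rintegral P setT g.
Proof.
move=> mf mg fM gN fg.
have PT : (P setT < +oo)%E by rewrite probability_setT ltry.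
have integrable h K := @finite_measure_bounded_integrable P h K PT.
have ig := integrable _ _ mg gN.
have mcg : measurable_fun setT (fun x => c * g x) by exact: measurable_funM.
have cgN x : `|c * g x| <= `|c| * N by rewrite normrM ler_wpM2l.
have icg := integrable _ _ mcg cgN.
have ia := integrable (fun=> a) `|a| (measurable_cst a) (fun=> lexx _).
have -> : a = Rintegral P setT (fun=> a).
  rewrite Rintegral_cst // (_ : fine _ = 1) ?mulr1 //.
  by have := probability_setT P => /(congr1 fine).
rewrite -RintegralZl // -RintegralB //; apply: le_Rintegral => //.
  exact: integrable _ _ mf fM.
apply: (integrable _ (`|a| + `|c| * N)); first exact: measurable_funB.
by move=> x; apply: le_trans (ler_normB _ _) _; rewrite lerD2l.
Qed.

End AffineBoundIntegral.

Theorem mainTheorem3 (d : measure_display) (X : measurableType d)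
  (R : realType) (PX : probability X R) (P1 P2 : X -> R)
  (mP1 : measurable_fun setT P1) (mP2 : measurable_fun setT P2)
  (P1ge0 : forall x, 0 <= P1 x) (P2ge0 : forall x, 0 <= P2 x)
  (P12 : forall x, P1 x + P2 x = 1) :
  Rintegral PX setT (fun x => Num.min (P1 x) (P2 x))
  <= 1 / 2 * (1 - 6 / (3 * Num.sqrt 2 - 2)
                  * Rintegral PX setT (fun x => fSN3star (P2 x))).
Proof.
have P1E x : P1 x = 1 - P2 x by rewrite -(P12 x) addrK.
have P2_01 x : 0 <= P2 x <= 1 by rewrite P2ge0 -subr_ge0 -P1E P1ge0.
rewrite (eq_Rintegral _ (fun x _ => fSN3starE _ (P2_01 x))).
have k0 := lt0r_neq0 (@sqrt2_affine_gt0 R).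
have -> : forall I : R, 1 / 2 * (1 - 6 / (3 * Num.sqrt 2 - 2) * I)
    = 1 / 2 - 3 / (3 * Num.sqrt 2 - 2) * I by move=> I; field.
apply: (Rintegral_le_affine _ _ _ _ _ 1 1) => [||x|x|x].
- exact: measurable_minr.
- exact: measurableT_comp measurable_fSN3star_closed mP2.
- have := P2_01 x; rewrite ler_norml P1E.
  by case: (leP (1 - P2 x) (P2 x)) => _; lra.
- exact: normr_fSN3star_closed_le1.
- by rewrite P1E; exact: min_le_fSN3star_closed.
Qed.
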